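(* Let $W=\sum_{j\in[n]}p_j\mathrm B(\varepsilon_j)\in\mathbb B_n$ and $Q=\sum_{i\in[m]}q_i\mathrm B(\sigma_i)\in\mathbb B_m$, where $(p_j)$, $(q_i)$ are probability vectors and $\varepsilon_1,\dots,\varepsilon_n,\sigma_1,\dots,\sigma_m\in[0,1/2]$. Then $W\preccurlyeq Q$ if and only if there is a 1-matrix $(k_{i,j})_{m\times n}$ of pattern $(q_1,\dots,q_m;p_1,\dots,p_n)$ such that $$p_j\varepsilon_j\ \ge\ \sum_{i\in[m]}k_{i,j}\sigma_i\qquad\text{for every } j\in[n].$$
   Context: A binary-input discrete memoryless channel (BIDMC) $W$ has input $x$ uniformly distributed on $\{0,1\}$, a discrete output alphabet and transition probabilities $\Pr(y\mid x)$. Its LR-profile is $P_W(\varepsilon)=\Pr\big(\mathcal L_W(y)=\varepsilon/(1-\varepsilon)\big)$, $\varepsilon\in[0,1]$, where $\mathcal L_W(\hat y)=\Pr(y=\hat y\mid x=0)/\Pr(y=\hat y\mid x=1)$; $W\cong W'$ (equivalent) if their LR-profiles coincide, and all channel identities are up to $\cong$. $W'$ is a degradation of $W$, written $W'\preccurlyeq W$, if there is a channel $R$ from the output alphabet $\mathcal Y$ of $W$ to the output alphabet $\mathcal Y'$ of $W'$ with $\Pr(y'\mid x'=a)=\sum_{y\in\mathcal Y}\Pr(y\mid x=a)R(y'\mid y)$ for $a\in\{0,1\}$. $\mathrm B(\varepsilon)$ is the BSC with crossover probability $\varepsilon$. For BIDMCs $W_1,\dots,W_n$ and nonnegative $q_1,\dots,q_n$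 with sum 1, the random switching channel $\sum_j q_jW_j$ sends, with probability $q_j$ independently of the input, the input through $W_j$ and outputs the output of $W_j$ together with $j$. $\mathbb B_n$ is the set of BIDMCs equivalent to $\sum_{i\in[n]}p_i\mathrm B(\varepsilon_i)$ for some probability vector $(p_i)$ and $\varepsilon_i\in[0,1]$. $[n]=\{1,\dots,n\}$. A 1-matrix of pattern $(q_1,\dots,q_m;p_1,\dots,p_n)$ is a matrix $(k_{i,j})_{m\times n}$ with $k_{i,j}\ge0$, $\sum_{j\in[n]}k_{i,j}=q_i$ ($i\in[m]$) and $\sum_{i\in[m]}k_{i,j}=p_j$ ($j\in[n]$). *)

From HB Require Import structures.
From mathcomp Require Import all_boot all_order all_algebra.
From mathcomp Require Import reals.
Set Implicit Arguments. Unset Strict Implicit. Unset Printing Implicit Defensive.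
Import Order.TTheory GRing.Theory Num.Theory.
Local Open Scope ring_scope.

(* A binary-input channel with finite output alphabet Y:
   chan R Y a y = Pr(y | x = a). *)
Definition chan (R : realType) (Y : finType) := bool -> Y -> R.

Definition bsc (R : realType) (eps : R) : chan R bool :=
  fun a b => if a == b then 1 - eps else eps.

(* The random switching channel sum_j p_j B(eps_j): it outputs the pair
   (j, output of B(eps_j)), j being chosen with probability p_j. *)
Definition bsc_switch (R : realType) (n : nat) (p eps : 'I_n -> R)
  : chan R ('I_n * bool)%type :=
  fun a y => p y.1 * bsc (eps y.1) a y.2.

(* Degradation: W' \preccurlyeq W iff there is a channel (stochastic
   kernel) Rk from the outputs of W to the outputs of W' with
   W'(y'|a) = sum_y W(y|a) Rk(y'|y). *)
Definition degraded (R : realType) (Y Y' : finType)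
    (W' : chan R Y') (W : chan R Y) : Prop :=
  exists Rk : Y -> Y' -> R,
    (forall y y', 0 <= Rk y y') /\
    (forall y, \sum_(y' : Y') Rk y y' = 1) /\
    (forall a y', W' a y' = \sum_(y : Y) W a y * Rk y y').

Definition prob_vec (R : realType) (n : nat) (p : 'I_n -> R) : Prop :=
  (forall j, 0 <= p j) /\ \sum_(j < n) p j = 1.

Definition one_matrix (R : realType) (m n : nat)
    (q : 'I_m -> R) (p : 'I_n -> R) (k : 'M[R]_(m, n)) : Prop :=
  (forall i j, 0 <= k i j) /\
  (forall i, \sum_(j < n) k i j = q i) /\
  (forall j, \sum_(i < m) k i j = p j).

From HB Require Import structures.
From mathcomp Require Import all_boot all_order all_algebra.
From mathcomp Require Import reals.
From mathcomp Require Import ring lra.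
Set Implicit Arguments. Unset Strict Implicit. Unset Printing Implicit Defensive.
Import Order.TTheory GRing.Theory Num.Theory.
Local Open Scope ring_scope.

(* Necessity: a degrading kernel [Rk] moves mass from the outputs of block [i]
   of [Q] to those of block [j] of [W]; averaging that mass over the two input
   bits and weighting by [q_i] gives [k_ij].  The error probability of [W] on
   block [j] is at least the [sigma_i]-share of that mass, because both
   crossover weights [sigma_i] and [1 - sigma_i] are at least [sigma_i].
   Sufficiency: follow [Q] by the kernel that maps block [i] to block [j] with
   probability [k_ij / q_i] and then flips the bit with probability [d_j].  A
   bit passed through [B(sigma)] and then [B(d)] sees [B(sigma + d (1 - 2 sigma))],
   which is affine in [d], so [d_j] can be chosen in [[0,1]] to make the
   aggregated error mass on block [j] exactly [p_j eps_j]. *)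

Lemma big_pair_bool (V : nmodType) (T : finType) (F : T * bool -> V) :
  \sum_(y : T * bool) F y = \sum_(t : T) (F (t, false) + F (t, true)).
Proof.
transitivity (\sum_(t : T) \sum_(b : bool) F (t, b)).
  by rewrite pair_bigA; apply: eq_bigr => -[].
by apply: eq_bigr => t _; rewrite big_bool addrC.
Qed.

Section BinarySymmetricChannel.
Variable R : realType.
Implicit Types (e s d w : R) (a b c : bool).

Lemma bsc_add_out e a : bsc e a false + bsc e a true = 1.
Proof. by rewrite /bsc; case: a => /=; ring. Qed.

Lemma mul_bsc w e a b : w * bsc e a b = if a == b then w - w * e else w * e.
Proof. by rewrite /bsc; case: (a == b); ring. Qed.

Lemma sum_mul_bsc (I : finType) (w e : I -> R) a b :
  \sum_i w i * bsc (e i) a b =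
  if a == b then \sum_i w i - \sum_i w i * e i else \sum_i w i * e i.
Proof.
under eq_bigr do rewrite mul_bsc.
by case: (a == b); rewrite ?sumrB.
Qed.

Lemma bsc_comp s d a c :
  \sum_b bsc s a b * bsc d b c = bsc (s + d * (1 - 2 * s)) a c.
Proof. by rewrite big_bool /bsc; case: a; case: c => /=; ring. Qed.

End BinarySymmetricChannel.

Definition affine_solution (R : realType) (A B E : R) : R :=
  if B == 0 then 0 else (E - A) / B.

Lemma affine_solutionP (R : realType) (A B E : R) :
  0 <= B -> A <= E <= A + B ->
  0 <= affine_solution A B E <= 1 /\ A + affine_solution A B E * B = E.
Proof.
move=> B_ge0 /andP[AE EAB]; rewrite /affine_solution.
have [B0|B_neq0] := eqVneq B 0.
  by rewrite lexx ler01; split=> //; move: EAB; rewrite B0; lra.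
have B_gt0 : 0 < B by rewrite lt_def B_neq0.
split; last by rewrite divfK //; ring.
by rewrite divr_ge0 ?subr_ge0 //= ler_pdivrMr // mul1r; lra.
Qed.

Section Necessity.
Variables (R : realType) (m n : nat) (p eps : 'I_n -> R) (q sigma : 'I_m -> R).
Variable Rk : 'I_m * bool -> 'I_n * bool -> R.
Hypothesis Rk_ge0 : forall y y', 0 <= Rk y y'.
Hypothesis Rk_sum1 : forall y, \sum_y' Rk y y' = 1.
Hypothesis Rk_degrades :
  forall a y', bsc_switch p eps a y' = \sum_y bsc_switch q sigma a y * Rk y y'.

Lemma block_output a j b' : p j * bsc (eps j) a b' =
  \sum_i (q i * bsc (sigma i) a false * Rk (i, false) (j, b')
        + q i * bsc (sigma i) a true * Rk (i, true) (j, b')).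
Proof. by have := Rk_degrades a (j, b'); rewrite big_pair_bool. Qed.

Definition block_out i b j := Rk (i, b) (j, false) + Rk (i, b) (j, true).

Definition block_mass i j := block_out i false j + block_out i true j.

Definition block_matrix : 'M[R]_(m, n) :=
  \matrix_(i, j) (q i * block_mass i j / 2).

Lemma sum_block_out i b : \sum_j block_out i b j = 1.
Proof. by rewrite -(Rk_sum1 (i, b)) big_pair_bool. Qed.

Lemma sum_block_mass i : \sum_j block_mass i j = 2.
Proof. by rewrite big_split /= !sum_block_out. Qed.

Lemma sum_weighted_block_mass j : \sum_i q i * block_mass i j = 2 * p j.
Proof.
have e00 := block_output false j false; have e01 := block_output false j true.
have e10 := block_output true j false; have e11 := block_output true j true.
rewrite /bsc /= in e00 e01 e10 e11.
have -> : 2 * p j = p j * (1 - eps j) + p j * eps j + p j * eps j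
                    + p j * (1 - eps j) by ring.
rewrite {1}e00 {1}e01 {1}e10 {1}e11 -!big_split /=.
by apply: eq_bigr => i _; rewrite /block_mass /block_out; ring.
Qed.

Hypothesis q_ge0 : forall i, 0 <= q i.

Lemma block_matrix_one_matrix : one_matrix q p block_matrix.
Proof.
split; [|split] => [i j|i|j].
- by rewrite mxE !mulr_ge0 ?addr_ge0 ?invr_ge0 ?ler0n.
- under eq_bigr do rewrite mxE mulrAC.
  by rewrite -mulr_sumr sum_block_mass; field.
- under eq_bigr do rewrite mxE.
  by rewrite -mulr_suml sum_weighted_block_mass; field.
Qed.

Hypothesis sigma_le_half : forall i, sigma i <= 1 / 2.

(* The surplus of the error mass over the [sigma_i]-share is
   [q_i (1 - 2 sigma_i) (Rk(i,0)(j,1) + Rk(i,1)(j,0)) / 2]. *)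
Lemma block_matrix_error j : \sum_i block_matrix i j * sigma i <= p j * eps j.
Proof.
have e01 := block_output false j true; have e10 := block_output true j false.
rewrite /bsc /= in e01 e10.
have -> : p j * eps j = (p j * eps j + p j * eps j) / 2 by field.
rewrite [in X in X + _]e01 e10 -big_split mulr_suml /=.
apply: ler_sum => i _; rewrite mxE -subr_ge0.
set lhs := (X in 0 <= X).
have -> : lhs = q i * (1 - 2 * sigma i)
                * (Rk (i, false) (j, true) + Rk (i, true) (j, false)) / 2.
  by rewrite /lhs /block_mass /block_out; field.
have := sigma_le_half i => sigma_half.
by rewrite !mulr_ge0 ?invr_ge0 ?ler0n //; [lra | exact: addr_ge0].
Qed.

End Necessity.

Section Sufficiency.
Variables (R : realType) (m n : nat) (p eps : 'I_n -> R) (q sigma : 'I_m -> R).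
Variable k : 'M[R]_(m, n).
Hypothesis k_ge0 : forall i j, 0 <= k i j.
Hypothesis k_row : forall i, \sum_j k i j = q i.
Hypothesis k_col : forall j, \sum_i k i j = p j.
Hypothesis k_error : forall j, \sum_i k i j * sigma i <= p j * eps j.
Hypothesis sigma_le_half : forall i, sigma i <= 1 / 2.
Hypothesis p_ge0 : forall j, 0 <= p j.
Hypothesis eps_le_half : forall j, eps j <= 1 / 2.

Definition flip_prob j :=
  affine_solution (\sum_i k i j * sigma i) (\sum_i k i j * (1 - 2 * sigma i))
    (p j * eps j).

Lemma flip_probP j :
  0 <= flip_prob j <= 1 /\
  \sum_i k i j * (sigma i + flip_prob j * (1 - 2 * sigma i)) = p j * eps j.
Proof.
set A := \sum_i k i j * sigma i; set B := \sum_i k i j * (1 - 2 * sigma i).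
have B_ge0 : 0 <= B.
  by apply: sumr_ge0 => i _; rewrite mulr_ge0 //; have := sigma_le_half i; lra.
have AB_eq : A + B = p j - A.
  by rewrite -k_col -sumrB -big_split; apply: eq_bigr => i _ /=; ring.
have eps_bound : 0 <= p j * (1 - 2 * eps j).
  by rewrite mulr_ge0 //; have := eps_le_half j; lra.
have E_between : A <= p j * eps j <= A + B.
  by rewrite k_error AB_eq /=; have := k_error j; lra.
have [d01 dE] := affine_solutionP B_ge0 E_between.
rewrite /flip_prob -/A -/B; split=> //; rewrite -[RHS]dE mulr_sumr -big_split /=.
by apply: eq_bigr => i _; ring.
Qed.

Variable j0 : 'I_n.

(* Rows of [Q] with [q_i = 0] are never used; they are sent to a fixed output
   only so that every row of the kernel is a probability distribution. *)
Definition degrading_kernel (y : 'I_m * bool) (y' : 'I_n * bool) : R :=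
  if q y.1 == 0 then (y' == (j0, y.2))%:R
  else k y.1 y'.1 / q y.1 * bsc (flip_prob y'.1) y.2 y'.2.

Lemma k_eq0_of_q_eq0 i j : q i = 0 -> k i j = 0.
Proof.
move=> q0; have row0 : \sum_(j | true) k i j = 0 by rewrite k_row.
by apply: (psumr_eq0P _ row0) => // j' _; apply: k_ge0.
Qed.

Lemma degrading_kernel_ge0 y y' : 0 <= degrading_kernel y y'.
Proof.
rewrite /degrading_kernel; case: eqP => _; first exact: ler0n.
have [/andP[d0 d1] _] := flip_probP y'.1.
rewrite mulr_ge0 ?divr_ge0 //; first by rewrite -k_row sumr_ge0.
by rewrite /bsc; case: ifP => _; lra.
Qed.

Lemma degrading_kernel_sum1 y : \sum_y' degrading_kernel y y' = 1.
Proof.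
rewrite /degrading_kernel; case: eqP => [_|/eqP q_neq0].
  by rewrite (bigD1 (j0, y.2)) //= eqxx big1 ?addr0 // => y' /negbTE ->.
rewrite big_pair_bool /=.
under eq_bigr do rewrite -mulrDr bsc_add_out mulr1.
by rewrite -mulr_suml k_row divff.
Qed.

Lemma degrading_kernel_degrades a y' :
  bsc_switch p eps a y' =
  \sum_y bsc_switch q sigma a y * degrading_kernel y y'.
Proof.
case: y' => j c; rewrite big_pair_bool /bsc_switch /=.
have [_ flip_eq] := flip_probP j.
transitivity (\sum_i k i j * bsc (sigma i + flip_prob j * (1 - 2 * sigma i)) a c).
  by rewrite sum_mul_bsc k_col flip_eq mul_bsc.
apply: eq_bigr => i _; rewrite /degrading_kernel /=.
case: eqP => [q0|/eqP q_neq0]; first by rewrite q0 k_eq0_of_q_eq0 //; ring.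
by rewrite -bsc_comp big_bool mulrDr; field.
Qed.

End Sufficiency.

Lemma prob_vec_dim_gt0 (R : realType) (n : nat) (p : 'I_n -> R) :
  prob_vec p -> (0 < n)%N.
Proof.
case: n p => // p [_]; rewrite big_ord0 => /eqP.
by rewrite eq_sym oner_eq0.
Qed.

Theorem theorem1 (R : realType) (m n : nat)
  (p eps : 'I_n -> R) (q sigma : 'I_m -> R) :
  prob_vec p -> prob_vec q ->
  (forall j, 0 <= eps j <= 1 / 2) ->
  (forall i, 0 <= sigma i <= 1 / 2) ->
  degraded (bsc_switch p eps) (bsc_switch q sigma) <->
  exists k : 'M[R]_(m, n),
    one_matrix q p k /\
    (forall j, \sum_(i < m) k i j * sigma i <= p j * eps j).
Proof.
move=> pP [q_ge0 _] eps01 sigma01.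
have sigma_le_half i : sigma i <= 1 / 2 by case/andP: (sigma01 i).
have eps_le_half j : eps j <= 1 / 2 by case/andP: (eps01 j).
have p_ge0 := pP.1.
split=> [[Rk [Rk_ge0 [Rk_sum1 Rk_degrades]]]|[k [[k_ge0 [k_row k_col]] k_error]]].
  exists (block_matrix q Rk); split.
    exact: block_matrix_one_matrix.
  exact: block_matrix_error.
exists (degrading_kernel p eps q sigma k (Ordinal (prob_vec_dim_gt0 pP))).
split; [|split] => *.
- exact: degrading_kernel_ge0.
- exact: degrading_kernel_sum1.
- exact: degrading_kernel_degrades.
Qed.
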